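(* Let $n\ge 2$, $d\ge 1$, and $p\in\mathcal H(n,d)$. Then $$ d\le \frac{2N(p)-3}{n-1}. $$
   Context: $\mathcal H(n,d)$ is the set of real polynomials in $x_1,\dots,x_n$ of total degree exactly $d$, with all coefficients nonnegative, such that $p(x)=1$ whenever $\sum_{j=1}^n x_j=1$. $N(p)$ denotes the number of distinct monomials occurring with nonzero coefficient in $p$. *)

From mathcomp Require Import all_boot all_order all_algebra.
From mathcomp Require Import reals.
From mathcomp Require Import mpoly.
Set Implicit Arguments. Unset Strict Implicit. Unset Printing Implicit Defensive.
Import Order.TTheory GRing.Theory Num.Theory.
Local Open Scope ring_scope.

Definition inH (R : realType) (n d : nat) (p : {mpoly R[n]}) : Prop :=
  [/\ msize p = d.+1,
      (forall m : 'X_{1..n}, 0 <= p@_m) &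
      (forall x : 'I_n -> R, \sum_(i < n) x i = 1 -> p.@[x] = 1)].

Definition Nmon (R : realType) (n : nat) (p : {mpoly R[n]}) : nat :=
  size (msupp p).

From mathcomp Require Import all_boot all_order all_algebra.
From mathcomp Require Import reals.
From mathcomp Require Import mpoly.
From mathcomp Require Import ring lra zify.
Set Implicit Arguments. Unset Strict Implicit. Unset Printing Implicit Defensive.
Import Order.TTheory GRing.Theory Num.Theory.
Local Open Scope ring_scope.

(* Write n = e + 1.  The binomial row x_i = C(e,i) t^i / (1+t)^e lies on the
   simplex, so p(x) = 1 there; clearing denominators and putting t = -X turns
   this into the polynomial identity
     sum_m p_m k_m (-X)^phi(m) (1-X)^(e(d-|m|)) = (1-X)^(ed)
   with k_m > 0.  Peeling off the homogeneous parts A_j of degree j gives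
   remainders with W_(k+1) = (1-X)^e W_k - A_(k+1) and W_d = 0, and evaluating
   at X = -1 shows W_k <> 0 for k < d.  By Descartes' rule of signs each factor
   1 - X adds a sign change to the coefficient sequence, while subtracting a
   monomial removes at most two; so each degree j < d of p costs at least e
   sign changes paid for by twice the number N_j of monomials of degree j, and
   the top part A_d = (1-X)^e W_(d-1) has at least e sign changes but fewer than
   N_d.  Summing, e d <= 2 N(p) - 3. *)

Section SignChanges.
Variable R : realDomainType.
Implicit Types (a p q x : R) (s : seq R).

(* [p] stands for the last nonzero entry preceding [s] (0 if there is none). *)
Fixpoint sign_changes p s : nat :=
  if s is x :: s' then
    if x == 0 then sign_changes p s' else ((p * x < 0)%R + sign_changes x s')%N
  else 0.

Fixpoint last_nonzero p s : R :=
  if s is x :: s' then last_nonzero (if x == 0 then p else x) s' else p.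

Fixpoint diffs a s : seq R := if s is x :: s' then (x - a) :: diffs x s' else [::].

Lemma sign_changes_cat p s1 s2 :
  sign_changes p (s1 ++ s2) = (sign_changes p s1 + sign_changes (last_nonzero p s1) s2)%N.
Proof. by elim: s1 p => [|x s IH] p //=; case: eqP => _; rewrite IH // addnA. Qed.

Lemma last_nonzero_cat p s1 s2 :
  last_nonzero p (s1 ++ s2) = last_nonzero (last_nonzero p s1) s2.
Proof. by elim: s1 p => [|x s IH] p //=. Qed.

Lemma sign_changes_ncons0 p k s : sign_changes p (ncons k 0 s) = sign_changes p s.
Proof. by elim: k => //= k ->; rewrite eqxx. Qed.

Lemma sign_changes_init p q s : (sign_changes p s <= sign_changes q s + 1)%N.
Proof.
elim: s p q => [|x s IH] p q //=.
by case: eqP => _; [exact: IH | have := leq_b1 (p * x < 0)%R; lia].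
Qed.

(* The state after reading a prefix of [s]: [a] is its last entry, [p] its last
   nonzero entry, and [q] the last nonzero entry of its difference sequence. *)
Definition diffs_inv a p q :=
  if p == 0 then (a == 0) && (q == 0) else (q != 0) && ((a == 0) || (a == p)).

Lemma diffs_inv_cons a p q x : diffs_inv a p q ->
  diffs_inv x (last_nonzero p [:: x]) (last_nonzero q [:: x - a]).
Proof.
rewrite /diffs_inv /=; have [->|xn] := eqVneq x 0.
  have [_ /andP[/eqP-> /eqP->]|pn] := eqVneq p 0; first by rewrite subrr !eqxx.
  case/andP=> qn /orP[/eqP->|/eqP->]; first by rewrite subrr eqxx qn.
  by rewrite sub0r oppr_eq0 (negPf pn) oppr_eq0 pn.
rewrite (negPf xn) eqxx orbT andbT; have [xa|//] := eqVneq (x - a) 0.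
move/eqP: xa; rewrite subr_eq0 => /eqP xa; subst a.
by have [_ /andP[/eqP ax]|_ /andP[]//] := eqVneq p 0; rewrite ax eqxx in xn.
Qed.

Lemma sign_changes_diffs_cons a p q x : diffs_inv a p q ->
  (sign_changes p [:: x] + (last_nonzero q [:: (x - a)%R] * last_nonzero p [:: x] < 0)%R
   <= sign_changes q [:: (x - a)%R] + (q * p < 0)%R)%N.
Proof.
rewrite /diffs_inv /= !addn0; have [->|xn] := eqVneq x 0.
  have [_ /andP[/eqP-> /eqP->]|pn] := eqVneq p 0; first by rewrite subrr eqxx.
  case/andP=> qn /orP[/eqP->|/eqP->]; first by rewrite subrr eqxx.
  rewrite sub0r !oppr_eq0 (negPf pn) mulNr oppr_lt0 mulrN oppr_lt0 add0n.
  by have := mulf_neq0 qn pn; case: (ltgtP (q * p) 0) => // _ _; case: (0 < _).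
have [xa|xan] := eqVneq (x - a) 0.
  move/eqP: xa; rewrite subr_eq0 => /eqP xa; subst a.
  have [_ /andP[/eqP x0]|pn /andP[_ /orP[/eqP x0|/eqP->]]] := eqVneq p 0;
    rewrite ?x0 ?eqxx // in xn.
  by rewrite mulr_lt0 addbb !andbF.
have [-> /andP[/eqP a0 /eqP->]|pn /andP[qn /orP[/eqP a0|/eqP ap]]] := eqVneq p 0.
- by rewrite a0 subr0 !mul0r ltxx mulr_lt0 addbb !andbF.
- subst a; rewrite subr0 in xan *; rewrite (mulr_lt0 x) addbb !andbF addn0.
  by rewrite !neq0_mulr_lt0 //; case: (p < 0); case: (q < 0); case: (x < 0).
- subst a; rewrite !neq0_mulr_lt0 // subr_lt0.
  have : ((p < 0) != (x < 0)) ==> ((x < p) == (x < 0)).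
    apply/implyP; case: (ltgtP p 0) pn => // p0 _; case: (ltgtP x 0) xn => // x0 _ _;
      apply/eqP; lra.
  by case: (p < 0); case: (q < 0); case: (x < 0); case: (x < p).
Qed.

Lemma sign_changes_diffs a p q s : diffs_inv a p q ->
  (sign_changes p s + (last_nonzero q (diffs a s) * last_nonzero p s < 0)%R
   <= sign_changes q (diffs a s) + (q * p < 0)%R)%N.
Proof.
elim: s a p q => [|x s IH] a p q inv; first by rewrite /= addnC.
have := IH _ _ _ (diffs_inv_cons x inv); have := sign_changes_diffs_cons x inv.
rewrite -[x :: s]cat1s -[diffs a _]/([:: x - a] ++ diffs x s).
rewrite !sign_changes_cat !last_nonzero_cat; lia.
Qed.

Lemma last_nonzero_last p s : last p s != 0 -> last_nonzero p s = last p s.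
Proof.
elim: s p => [|x s IH] p //=; case: s IH => [|y s] IH /= xn.
  by rewrite (negPf xn).
exact: IH.
Qed.

Lemma last_nonzero_neq0 p s : (p != 0) || has (predC1 0) s -> last_nonzero p s != 0.
Proof.
elim: s p => [|x s IH] p /=; first by rewrite orbF.
move=> H; apply: IH; have [x0|xn] := eqVneq x 0; last by rewrite xn.
by move: H; rewrite x0 /= eqxx.
Qed.

Lemma has_diffs0 s : has (predC1 0) s -> has (predC1 0) (diffs 0 s).
Proof.
elim: s => [|x s IH] //=; rewrite subr0.
by have [->|//] := eqVneq x 0; exact: IH.
Qed.

Lemma diffs_rcons a s x : diffs a (rcons s x) = rcons (diffs a s) (x - last a s).
Proof. by elim: s a => [|y s IH] a //=; rewrite IH. Qed.

Lemma sign_changes_diffs_rcons0 s : last 0 s != 0 ->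
  (sign_changes 0%R s < sign_changes 0%R (diffs 0%R (rcons s 0%R)))%N.
Proof.
move=> sn; have inv0 : diffs_inv 0 0 0 by rewrite /diffs_inv !eqxx.
have := sign_changes_diffs s inv0; rewrite mulr0 ltxx addn0.
rewrite diffs_rcons -cats1 sign_changes_cat (last_nonzero_last sn) /=.
rewrite add0r oppr_eq0 (negPf sn) addn0 mulrN oppr_lt0.
have : last_nonzero 0 (diffs 0 s) * last 0 s != 0.
  rewrite mulf_neq0 // last_nonzero_neq0 // eqxx has_diffs0 //.
  case: s sn => [|x s] sn; first by rewrite eqxx in sn.
  by apply/hasP; exists (last x s); rewrite ?mem_last.
by case: ltgtP => // _ _; rewrite addn1 addn0.
Qed.

Lemma sign_changes_set_nth p s j y :
  (sign_changes p (set_nth 0%R s j y) <= sign_changes p s + 2)%N.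
Proof.
elim: s p j => [|x s IH] p j.
  rewrite set_nth_nil sign_changes_ncons0 /=.
  by case: eqP => _ //; have := leq_b1 (p * y < 0)%R; lia.
case: j => [|j] /=; last by case: eqP => _; [|rewrite -addnA leq_add2l].
have := sign_changes_init p x s; have := sign_changes_init y x s.
have := sign_changes_init y p s; have := leq_b1 (p * y < 0)%R.
by case: eqP => _; case: eqP => _; lia.
Qed.

Lemma sign_changes_le_count p s : (sign_changes p s <= count (predC1 0%R) s)%N.
Proof.
elim: s p => [|x s IH] p //=; case: eqP => _ /=; first exact: IH.
exact: leq_add (leq_b1 _) (IH x).
Qed.

Lemma sign_changes0_lt_count s :
  has (predC1 0) s -> (sign_changes 0%R s < count (predC1 0%R) s)%N.
Proof.
elim: s => [|x s IH] //=; case: eqP => [_ /= /IH|_ _] //=.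
by rewrite mul0r ltxx add1n ltnS sign_changes_le_count.
Qed.
End SignChanges.

Section Variations.
Variable R : realDomainType.
Implicit Types (g : {poly R}) (c : R).

Definition variations g : nat := sign_changes 0 g.

Lemma size_diffs (a : R) s : size (diffs a s) = size s.
Proof. by elim: s a => [|x s IH] a //=; rewrite IH. Qed.

Lemma nth_diffs (a : R) s i : (i < size s)%N ->
  nth 0 (diffs a s) i = nth 0 s i - (if i is j.+1 then nth 0 s j else a).
Proof. by elim: s a i => [|x s IH] a [|[|i]] //= ?; rewrite IH. Qed.

Lemma size_1subX : size (1 - 'X : {poly R}) = 2%N.
Proof. by rewrite -opprB size_polyN size_XsubC. Qed.

Lemma polyseq_mul_1subX g : g != 0 -> polyseq ((1 - 'X) * g) = diffs 0 (rcons g 0).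
Proof.
move=> gn; have X1n : (1 - 'X : {poly R}) != 0 by rewrite -size_poly_eq0 size_1subX.
apply: (@eq_from_nth _ 0); first by rewrite size_diffs size_rcons size_mul // size_1subX.
rewrite size_mul // size_1subX => i lti; rewrite nth_diffs ?size_rcons //.
have nth_rcons0 k : nth 0 (rcons g 0) k = g`_k.
  by rewrite nth_rcons; case: ltngtP => // [/ltnW h|->]; rewrite nth_default.
by rewrite mulrBl mul1r coefB coefXM nth_rcons0; case: i {lti} => //= i; rewrite nth_rcons0.
Qed.

Lemma variations_mul_1subX g : g != 0 -> (variations g < variations ((1 - 'X) * g))%N.
Proof.
move=> gn; rewrite /variations polyseq_mul_1subX //.
by apply: sign_changes_diffs_rcons0; rewrite -nth_last -lead_coefE lead_coef_eq0.
Qed.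

Lemma variations_mul_1subX_exp e g : g != 0 ->
  (variations g + e <= variations ((1 - 'X) ^+ e * g))%N.
Proof.
move=> gn; elim: e => [|e IH]; first by rewrite addn0 expr0 mul1r.
have X1n : (1 - 'X : {poly R}) != 0 by rewrite -size_poly_eq0 size_1subX.
rewrite exprS -mulrA addnS; apply: leq_trans (variations_mul_1subX _); first by [].
by rewrite mulf_neq0 // expf_neq0.
Qed.

Lemma sign_changes_mkseq_coef g K : (size g <= K)%N ->
  sign_changes 0 (mkseq (fun i => g`_i) K) = variations g.
Proof.
move=> leK; have -> : mkseq (fun i => g`_i) K = g ++ nseq (K - size g) 0.
  apply: (@eq_from_nth _ 0); first by rewrite size_mkseq size_cat size_nseq subnKC.
  move=> i; rewrite size_mkseq => ltiK; rewrite nth_mkseq // nth_cat nth_nseq.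
  by case: ltnP => // le; rewrite nth_default //; case: ifP.
by rewrite sign_changes_cat /nseq sign_changes_ncons0 addn0.
Qed.

Lemma variations_sub_monomial g c j : (variations g <= variations (g - c *: 'X^j) + 2)%N.
Proof.
set h := g - c *: 'X^j; set K := (size g + size h + j).+1.
have [leg leh ltj] : [/\ size g <= K, size h <= K & j < K]%N by split; rewrite /K; lia.
rewrite -(sign_changes_mkseq_coef leg) -(sign_changes_mkseq_coef leh).
suff -> : mkseq (fun i => g`_i) K = set_nth 0 (mkseq (fun i => h`_i) K) j g`_j.
  exact: sign_changes_set_nth.
apply: (@eq_from_nth _ 0) => [|i]; rewrite ?size_set_nth !size_mkseq; first lia.
move=> ltiK; rewrite nth_set_nth /= !nth_mkseq //.
by case: eqP => [->|/eqP ne] //; rewrite coefB coefZ coefXn (negPf ne) mulr0 subr0.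
Qed.

Lemma variations_sub_sum_monomials (T : Type) (l : seq T) (F : T -> R) (J : T -> nat) g :
  (variations g <= variations (g - \sum_(m <- l) F m *: 'X^(J m)) + 2 * size l)%N.
Proof.
elim: l g => [|m l IH] g; first by rewrite big_nil subr0 addn0.
rewrite big_cons opprD addrA /= mulnS addnCA.
apply: leq_trans (variations_sub_monomial g (F m) (J m)) _.
by rewrite addnC leq_add2l IH.
Qed.

Lemma variations_sum_monomials_lt (T : Type) (l : seq T) (F : T -> R) (J : T -> nat) :
  \sum_(m <- l) F m *: 'X^(J m) != 0 ->
  (variations (\sum_(m <- l) F m *: 'X^(J m)) < size l)%N.
Proof.
set h := \sum_(m <- l) _; move=> hn; rewrite /variations.
apply: leq_trans (sign_changes0_lt_count _) _.
  by apply/hasP; exists (lead_coef h); rewrite ?mem_nth ?ltn_predL ?size_poly_gt0 //= lead_coef_eq0.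
rewrite -(size_map J) -(mkseq_nth 0 h) count_map -size_filter.
apply: uniq_leq_size; first by rewrite filter_uniq ?iota_uniq.
move=> i; rewrite mem_filter /= => /andP[hi _]; apply: contraR hi => Jni.
apply/eqP; rewrite /h {hn h}; elim: l Jni => [|m l IH]; first by rewrite big_nil coef0.
rewrite big_cons coefD coefZ coefXn inE negb_or => /andP[/negPf-> /IH->].
by rewrite mulr0 addr0.
Qed.
End Variations.

Lemma count_range_succ (T : Type) (f : T -> nat) (l : seq T) k :
  count (fun x => 0 < f x <= k.+1)%N l =
  (count (fun x => 0 < f x <= k)%N l + count (fun x => f x == k.+1) l)%N.
Proof.
elim: l => [|x l IH] //=; rewrite IH addnACA; congr (_ + _)%N.
case: (ltngtP (f x) k.+1) => [lt|gt|->]; last by rewrite ltnn andbF.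
  by rewrite andbT addn0 -[(f x <= k)%N]ltnS lt andbT.
by rewrite andbF addn0 [(f x <= k)%N]leqNgt (ltn_trans (ltnSn k) gt) andbF.
Qed.

Section BinomialSubstitution.
Variables (R : realFieldType) (e : nat).
Implicit Types (m : 'X_{1..e.+1}) (t : R).

(* Under x_i = C(e,i) t^i / (1+t)^e the monomial x^m becomes
   bcoef m * t^(bdeg m) / (1+t)^(e * mdeg m). *)
Definition bdeg m : nat := (\sum_(i < e.+1) i * m i)%N.

Definition bcoef m : R := \prod_(i < e.+1) 'C(e, i)%:R ^+ m i.

Definition bterm (p : {mpoly R[e.+1]}) m : {poly R} :=
  (p@_m * bcoef m * (-1) ^+ bdeg m) *: 'X^(bdeg m).

Lemma bcoef_gt0 m : 0 < bcoef m.
Proof. by apply: prodr_gt0 => i _; rewrite exprn_gt0 // ltr0n bin_gt0 -ltnS. Qed.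

Lemma horner_bterm p m t : (bterm p m).[- t] = p@_m * bcoef m * t ^+ bdeg m.
Proof. by rewrite hornerZ hornerXn -!mulrA -exprMn mulN1r opprK. Qed.

Lemma meval_binomial_row p t (D := (1 + t) ^+ e) :
  p.@[fun i : 'I_e.+1 => 'C(e, i)%:R * t ^+ i / D] =
  \sum_(m <- msupp p) p@_m * bcoef m * t ^+ bdeg m * D^-1 ^+ mdeg m.
Proof.
rewrite mevalE; apply: eq_bigr => m _; rewrite -!mulrA; congr (_ * _).
rewrite (eq_bigr _ (fun i _ => exprMn _ _ _)) big_split /=.
rewrite (eq_bigr _ (fun i _ => exprMn _ _ _)) big_split /= -mulrA.
rewrite prodrXr -mdegE; congr (_ * (_ * _)).
by rewrite -prodrXr; apply: eq_bigr => i _; rewrite exprM.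
Qed.

Variables (d : nat) (p : {mpoly R[e.+1]}).
Hypothesis p_msize : msize p = d.+1.
Hypothesis p_ge0 : forall m, 0 <= p@_m.
Hypothesis p_simplex : forall x : 'I_e.+1 -> R, \sum_(i < e.+1) x i = 1 -> p.@[x] = 1.

Lemma mdeg_msupp_le m : m \in msupp p -> (mdeg m <= d)%N.
Proof. by move=> mp; rewrite -ltnS -p_msize msize_mdeg_lt. Qed.

Lemma binomial_identity t : 0 < t ->
  \sum_(m <- msupp p) p@_m * bcoef m * t ^+ bdeg m * (1 + t) ^+ (e * (d - mdeg m)) =
  (1 + t) ^+ (e * d).
Proof.
move=> t_gt0; set D := (1 + t) ^+ e.
have D_neq0 : D != 0 by rewrite expf_neq0 // lt0r_neq0 // addr_gt0.
have row_sum : \sum_(i < e.+1) 'C(e, i)%:R * t ^+ i / D = 1.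
  rewrite -mulr_suml [X in X / D](_ : _ = D) ?divff //.
  by rewrite /D addrC exprD1n; apply: eq_bigr => i _; rewrite mulr_natl.
have := p_simplex row_sum; rewrite meval_binomial_row -/D => sum1.
rewrite exprM -/D -[RHS]mulr1 -[X in _ * X]sum1 mulr_sumr; apply: eq_big_seq => m mp.
rewrite exprM -/D -{2}(subnK (mdeg_msupp_le mp)) exprD exprVn.
by field; rewrite expf_neq0.
Qed.

Lemma bterm_identity :
  \sum_(m <- msupp p) bterm p m * (1 - 'X) ^+ (e * (d - mdeg m)) = (1 - 'X) ^+ (e * d).
Proof.
apply/eqP; rewrite -subr_eq0; apply/eqP; set P := _ - _.
apply: (@roots_geq_poly_eq0 _ P [seq - (i.+1)%:R | i <- iota 0 (size P)]).
- apply/allP => _ /mapP[i _ ->].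
  rewrite /root /P hornerD hornerN horner_sum horner_exp !hornerE opprK subr_eq0.
  rewrite -(binomial_identity (ltr0Sn _ i)); apply/eqP/eq_bigr => m _.
  by rewrite hornerM horner_bterm horner_exp !hornerE opprK.
- by rewrite map_inj_uniq ?iota_uniq // => i j /oppr_inj/eqP; rewrite eqr_nat => /eqP[].
- by rewrite size_map size_iota.
Qed.

Definition bpart j : {poly R} := \sum_(m <- msupp p | mdeg m == j) bterm p m.

Definition brem k : {poly R} :=
  (1 - 'X) ^+ (e * k) -
  \sum_(m <- msupp p | (mdeg m <= k)%N) bterm p m * (1 - 'X) ^+ (e * (k - mdeg m)).

Lemma brem_succ k : brem k.+1 = (1 - 'X) ^+ e * brem k - bpart k.+1.
Proof.
rewrite /brem /bpart mulrBr -exprD -mulnS -addrA -opprD; congr (_ - _).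
rewrite mulr_sumr big_mkcond [X in _ = X + _]big_mkcond [X in _ = _ + X]big_mkcond.
rewrite -big_split /=; apply: eq_bigr => m _.
case: (ltngtP (mdeg m) k.+1) => [lt|gt|->]; last by rewrite ltnn subnn muln0 mulr1 add0r.
  by rewrite -ltnS lt addr0 subSn // mulnS exprD mulrCA.
by rewrite leqNgt (ltn_trans (ltnSn k) gt) addr0.
Qed.

Lemma brem_top : brem d = 0.
Proof.
rewrite /brem -big_filter (_ : [seq m <- msupp p | _] = msupp p) ?bterm_identity ?subrr //.
by apply/all_filterP/allP => m; apply: mdeg_msupp_le.
Qed.

Lemma horner_bpart_N1 j : (bpart j).[-1] = \sum_(m <- msupp p | mdeg m == j) p@_m * bcoef m.
Proof. by rewrite horner_sum; apply: eq_bigr => m _; rewrite horner_bterm expr1n mulr1. Qed.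

Lemma horner_bpart_N1_ge0 j : 0 <= (bpart j).[-1].
Proof.
by rewrite horner_bpart_N1; apply: sumr_ge0 => m _; rewrite mulr_ge0 // ltW ?bcoef_gt0.
Qed.

Lemma horner_bpart_N1_top_gt0 : 0 < (bpart d).[-1].
Proof.
have [m mp /eqP md] : exists2 m, m \in msupp p & mdeg m == d.
  apply/hasP; apply: contraT => /hasPn top_empty; suff : (msize p <= d)%N by rewrite p_msize ltnn.
  rewrite msizeE; apply/bigmax_leqP_seq => m mp _.
  by rewrite ltn_neqAle top_empty ?mdeg_msupp_le.
rewrite horner_bpart_N1 -big_filter (bigD1_seq m) ?filter_uniq ?msupp_uniq //=; last first.
  by rewrite mem_filter md eqxx.
rewrite ltr_pwDl ?mulr_gt0 ?bcoef_gt0 //; first by rewrite lt_def p_ge0 andbT -mcoeff_msupp.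
by apply: sumr_ge0 => m' _; rewrite mulr_ge0 // ltW ?bcoef_gt0.
Qed.

Lemma horner_brem_N1_succ k : (brem k.+1).[-1] = 2 ^+ e * (brem k).[-1] - (bpart k.+1).[-1].
Proof. by rewrite brem_succ hornerD hornerN hornerM horner_exp !hornerE opprK. Qed.

Lemma brem_neq0 k : (k < d)%N -> brem k != 0.
Proof.
(* At X = -1 the recursion reads w_(k+1) = 2^e w_k - a_(k+1) with a_j >= 0 and
   a_d > 0, so once w vanishes it stays <= 0 and cannot vanish again at d. *)
move=> ltkd; apply/eqP => rem0.
have two_e_ge0 : 0 <= 2 ^+ e :> R by rewrite exprn_ge0.
have rem_le0 j : (k <= j)%N -> (j < d)%N -> (brem j).[-1] <= 0.
  elim: j => [|j IH] lekj ltjd; first by move: lekj; rewrite leqn0 => /eqP <-; rewrite rem0 horner0.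
  case: (ltngtP k j.+1) lekj => // [ltkj _|<- _]; last by rewrite rem0 horner0.
  have := IH ltkj (ltnW ltjd); have := horner_bpart_N1_ge0 j.+1; rewrite horner_brem_N1_succ; nra.
have d_gt0 : (0 < d)%N by apply: leq_ltn_trans ltkd.
have := horner_brem_N1_succ d.-1; rewrite prednK // brem_top horner0.
have := rem_le0 d.-1; rewrite -ltnS prednK // => /(_ ltkd (leqnn d)).
have := horner_bpart_N1_top_gt0; nra.
Qed.

Lemma bpartE j : bpart j = \sum_(m <- [seq m <- msupp p | mdeg m == j])
  (p@_m * bcoef m * (-1) ^+ bdeg m) *: 'X^(bdeg m).
Proof. by rewrite big_filter. Qed.

Lemma variations_brem k : (k < d)%N ->
  (e * k <= variations (brem k) + 2 * count (fun m => 0 < mdeg m <= k)%N (msupp p))%N.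
Proof.
elim: k => [|k IH] ltkd; first by rewrite muln0.
have := IH (ltnW ltkd); have := variations_mul_1subX_exp e (brem_neq0 (ltnW ltkd)).
have := variations_sub_sum_monomials [seq m <- msupp p | mdeg m == k.+1]
  (fun m => p@_m * bcoef m * (-1) ^+ bdeg m) bdeg ((1 - 'X) ^+ e * brem k).
rewrite -bpartE -brem_succ size_filter count_range_succ mulnS.
(* The [set]s identify convertible copies of the same term, which [lia] would
   otherwise treat as distinct atoms. *)
set V0 := variations (brem k); set V1 := variations (_ * _); set V2 := variations _.
set C0 := count _ _; set C1 := count _ _; lia.
Qed.

Lemma size_msupp_lower_bound : (0 < d)%N -> (0 < e)%N -> (e * d + 3 <= 2 * size (msupp p))%N.
Proof.
move=> d_gt0 e_gt0; set k := d.-1; have d_eq : d = k.+1 by rewrite prednK.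
have rem_neq0 : brem k != 0 by apply: brem_neq0; rewrite d_eq.
have top : (1 - 'X) ^+ e * brem k = bpart d.
  by apply/eqP; rewrite -subr_eq0 d_eq -brem_succ -d_eq brem_top.
have part_neq0 : bpart d != 0.
  by rewrite -top mulf_neq0 // expf_neq0 // -size_poly_eq0 size_1subX.
have := variations_brem (k := k); rewrite -d_eq => /(_ (leqnn d)).
have := variations_mul_1subX_exp e rem_neq0; rewrite top.
have := @variations_sum_monomials_lt _ _ [seq m <- msupp p | mdeg m == d]
  (fun m => p@_m * bcoef m * (-1) ^+ bdeg m) bdeg; rewrite -bpartE => /(_ part_neq0).
have := count_size (fun m => 0 < mdeg m <= d)%N (msupp p).
rewrite d_eq count_range_succ size_filter mulnS -d_eq.
set C0 := count _ _; set C1 := count _ _; lia.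
Qed.
End BinomialSubstitution.

Theorem proposition4 (R : realType) (n d : nat) (p : {mpoly R[n]}) :
  (2 <= n)%N -> (1 <= d)%N -> @inH R n d p ->
  (d%:R : R) <= ((2 * @Nmon R n p)%:R - 3) / (n%:R - 1).
Proof.
case: n p => [|e] p // n_ge2 d_gt0 [p_msize p_ge0 p_simplex].
have := size_msupp_lower_bound p_msize p_ge0 p_simplex d_gt0 n_ge2.
rewrite -(ler_nat R) natrD natrM => bound.
have e_gt0 : (0 : R) < e%:R by rewrite ltr0n.
have -> : e.+1%:R - 1 = e%:R :> R by rewrite -addn1 natrD addrK.
rewrite ler_pdivlMr // /Nmon; lra.
Qed.
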